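(* (a) Let $\lambda=(n^m)$ be a rectangle and $1\le c\le n-1$. Then the total number of pairs $(T,u)$ with $T$ a standard Young tableau of shape $[\lambda]$ and $(T,u)$ a horizontal adjacency in column $c$ equals $f_\lambda$. (b) Let $\lambda$ be a strict partition with $\lambda_i=\lambda_1-i+1$ for all $1\le i\le\ell(\lambda)$ (a shifted rectangle) and $1\le c\le\lambda_1-1$. Then the total number of pairs $(T,u)$ with $T$ a shifted standard Young tableau of shape $[\lambda]^{\mathrm{sh}}$ and $(T,u)$ a horizontal adjacency in column $c$ equals $g^\lambda$.
   Context: Matrix coordinates. $[\lambda]=\{(i,j):i\in[\ell],j\in[\lambda_i]\}$; for strict $\lambda$, $[\lambda]^{\mathrm{sh}}=\{(i,j+i-1):i\in[\ell],j\in[\lambda_i]\}$. (Shifted) standard Young tableaux are bijections from the cell set to $[|\lambda|]$ increasing along rows and columns; $f_\lambda$ counts standard Young tableaux of shape $[\lambda]$ and $g^\lambda$ counts shifted ones of shape $[\lambda]^{\mathrm{sh}}$. For $u=(i,j)$ in the cell set $D$, $(T,u)$ is a horizontal adjacency if $(i,j+1)\in D$ and $T(i,j+1)=T(u)+1$; it lies in column $j$. *)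

From mathcomp Require Import all_boot.
Set Implicit Arguments. Unset Strict Implicit. Unset Printing Implicit Defensive.

(* A cell set is a duplicate-free list of matrix coordinates (i,j), 1-indexed. *)
Definition cell := (nat * nat)%type.

Definition young_cells (la : seq nat) : seq cell :=
  flatten [seq [seq (i.+1, j.+1) | j <- iota 0 (nth 0 la i)] | i <- iota 0 (size la)].

Definition shifted_cells (la : seq nat) : seq cell :=
  flatten [seq [seq (i.+1, j.+1 + i) | j <- iota 0 (nth 0 la i)] | i <- iota 0 (size la)].

(* A filling T of a cell list D is a list of values, T`_k being the entry
   in cell D`_k. *)
Definition entry (D : seq cell) (T : seq nat) (u : cell) : nat :=
  nth 0 T (index u D).

Definition is_standard (D : seq cell) (T : seq nat) : bool :=
  perm_eq T (iota 1 (size D)) &&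
  all (fun u =>
         (((u.1, u.2.+1) \in D) ==> (entry D T u < entry D T (u.1, u.2.+1))) &&
         (((u.1.+1, u.2) \in D) ==> (entry D T u < entry D T (u.1.+1, u.2))))
      D.

Definition SYT (D : seq cell) : seq (seq nat) :=
  [seq T <- permutations (iota 1 (size D)) | is_standard D T].

Definition num_SYT (D : seq cell) : nat := size (SYT D).

Definition f_shape (la : seq nat) : nat := num_SYT (young_cells la).
Definition g_shape (la : seq nat) : nat := num_SYT (shifted_cells la).

Definition horiz_adj (D : seq cell) (T : seq nat) (u : cell) : bool :=
  ((u.1, u.2.+1) \in D) && (entry D T (u.1, u.2.+1) == (entry D T u).+1).

Definition adj_count (D : seq cell) (c : nat) : nat :=
  \sum_(T <- SYT D) count (fun u => (u.2 == c) && horiz_adj D T u) D.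

Definition strict_partition (la : seq nat) : bool :=
  all (fun x => 0 < x) la && sorted (fun a b => b < a) la.

From mathcomp Require Import all_boot zify.
Set Implicit Arguments. Unset Strict Implicit. Unset Printing Implicit Defensive.

(* Let D be a shape with a unique minimal cell c1, lying in column 1, and a unique
   maximal cell cN. In a standard tableau T every cell but cN has a successor (the cell
   holding the next entry) and every cell but c1 a predecessor, so counting the cells of
   column a through their successors and through their predecessors gives the same
   number. A successor pair is a horizontal adjacency (it moves from column a-1 to a),
   a vertical adjacency (it stays in its column), or a pair of non-neighbouring cells.
   Exchanging the two entries of a non-neighbouring pair is a bijection between the
   tableaux with the pair (u,v) and those with (v,u), so summed over all tableaux these
   pairs contribute equally to both counts. What is left is
     H(a) + f [cN in column a] = H(a-1) + f [c1 in column a],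
   where H(a) counts horizontal adjacencies in column a and f standard tableaux; since
   H(0) = 0, H(a) = f for every column strictly between 0 and that of cN. Rectangles and
   shifted staircases are such shapes, with cN at the end of their last row. *)

Lemma count_sumb (X : Type) (p : pred X) (s : seq X) :
  count p s = \sum_(x <- s) (p x : nat).
Proof. by rewrite -sum1_count big_mkcond; apply: eq_bigr => x _; case: (p x). Qed.

Lemma sum_nat_const_seq (X : Type) (s : seq X) (k : nat) :
  \sum_(x <- s) k = size s * k.
Proof. by rewrite big_const_seq count_predT iter_addn_0 mulnC. Qed.

Lemma sum_andbl (X : Type) (s : seq X) (b : bool) (P : pred X) :
  \sum_(x <- s) (b && P x : nat) = b * \sum_(x <- s) (P x : nat).
Proof. by rewrite big_distrr /=; apply: eq_bigr => x _; rewrite mulnb. Qed.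

Section UniqSeq.
Variables (X : eqType) (s : seq X).
Hypothesis uniq_s : uniq s.

Lemma sumb_eq_uniq (c : X) (b : X -> bool) :
  \sum_(x <- s) ((x == c) && b x : nat) = (c \in s) && b c.
Proof.
rewrite (eq_bigr (fun x => (x == c : nat) * b c)); last first.
  by move=> x _; case: eqP => [->|]; rewrite ?mul0n ?mul1n.
by rewrite -big_distrl /= -count_sumb count_uniq_mem //; case: (c \in s); case: (b c).
Qed.

Lemma count_neq_uniq (P : pred X) (c : X) : c \in s ->
  \sum_(x <- s) (P x && (x != c) : nat) + P c = count P s.
Proof.
move=> cs; have -> : (P c : nat) = \sum_(x <- s) ((x == c) && P x : nat).
  by rewrite sumb_eq_uniq cs.
rewrite -big_split count_sumb; apply: eq_bigr => x _.
by case: (eqVneq x c) => [->|]; rewrite ?eqxx /= ?andbF ?andbT ?addn0.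
Qed.

End UniqSeq.

Lemma mem_SYT D T : (T \in SYT D) = is_standard D T.
Proof.
rewrite mem_filter mem_permutations /is_standard.
by case: (perm_eq T _); rewrite ?andbF ?andbT.
Qed.

Lemma SYT_uniq D : uniq (SYT D).
Proof. exact/filter_uniq/permutations_uniq. Qed.

Definition next_cell (u v : cell) := (v == (u.1, u.2.+1)) || (v == (u.1.+1, u.2)).

Lemma entry_map D T (f : nat -> nat) w : w \in D -> size T = size D ->
  entry D (map f T) w = f (entry D T w).
Proof. by move=> wD sT; rewrite /entry (nth_map 0) // sT index_mem. Qed.

Lemma map_entry D T : uniq D -> size T = size D -> map (entry D T) D = T.
Proof.
move=> uD sT; apply: (@eq_from_nth _ 0); first by rewrite size_map sT.
move=> i; rewrite size_map => Hi.
by rewrite (nth_map (0,0)) // /entry index_uniq.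
Qed.

Section StandardFilling.
Variables (D : seq cell) (T : seq nat).
Hypotheses (uniqD : uniq D) (stdT : is_standard D T).

Lemma perm_standard : perm_eq T (iota 1 (size D)).
Proof. by case/andP: stdT. Qed.

Lemma size_standard : size T = size D.
Proof. by rewrite (perm_size perm_standard) size_iota. Qed.

Lemma uniq_standard : uniq T.
Proof. by rewrite (perm_uniq perm_standard) iota_uniq. Qed.

Lemma mem_standard x : (x \in T) = (0 < x <= size D).
Proof. by rewrite (perm_mem perm_standard) mem_iota add1n ltnS. Qed.

Lemma entry_lt u v : u \in D -> v \in D -> next_cell u v -> entry D T u < entry D T v.
Proof.
move=> uD vD; case/andP: stdT => _ /allP/(_ u uD)/andP[/implyP hr /implyP hb].
by case/orP=> /eqP ev; rewrite ev in vD *; [apply: hr | apply: hb].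
Qed.

Lemma entry_range w : w \in D -> 0 < entry D T w <= size D.
Proof. by move=> wD; rewrite -mem_standard mem_nth // size_standard index_mem. Qed.

Lemma entry_inj : {in D &, injective (entry D T)}.
Proof.
move=> w1 w2 w1D w2D /eqP.
rewrite /entry nth_uniq ?size_standard ?index_mem ?uniq_standard //.
by move/eqP/(index_inj (0,0) w1D w2D).
Qed.

Lemma entry_onto k : 0 < k <= size D -> exists2 w, w \in D & entry D T w = k.
Proof.
rewrite -mem_standard -{1}(map_entry uniqD size_standard).
by case/mapP=> w wD ->; exists w.
Qed.

Lemma sum_entry (F : nat -> nat) : \sum_(v <- D) F (entry D T v) = \sum_(x <- T) F x.
Proof. by rewrite -{2}(map_entry uniqD size_standard) big_map. Qed.

Lemma sum_entry_eq k : \sum_(v <- D) (entry D T v == k : nat) = (0 < k <= size D).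
Proof.
by rewrite (sum_entry (fun x => (x == k : nat))) -count_sumb count_uniq_mem
  ?uniq_standard ?mem_standard.
Qed.

End StandardFilling.

Lemma standardP D T : perm_eq T (iota 1 (size D)) ->
  {in D &, forall u v, next_cell u v -> entry D T u < entry D T v} -> is_standard D T.
Proof.
move=> pT lt_uv; rewrite /is_standard pT; apply/allP => u uD.
by apply/andP; split; apply/implyP => vD; apply: lt_uv; rewrite // /next_cell eqxx ?orbT.
Qed.

Definition swap_val (x t : nat) := if t == x then x.+1 else if t == x.+1 then x else t.

Lemma swap_valK x : involutive (swap_val x).
Proof. by move=> t; rewrite /swap_val; do !case: eqP; lia. Qed.

Lemma swap_val_lt x a b : a < b -> (a, b) != (x, x.+1) -> swap_val x a < swap_val x b.
Proof. by rewrite xpair_eqE /swap_val; do !case: eqP; lia. Qed.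

Lemma perm_swap_val x n : 0 < x < n ->
  perm_eq (map (swap_val x) (iota 1 n)) (iota 1 n).
Proof.
move=> x_lt; apply: uniq_perm; last 1 first.
- move=> t; rewrite -{1}(swap_valK x t) (mem_map (can_inj (swap_valK x))) !mem_iota.
  by rewrite /swap_val; do !case: eqP; lia.
- by rewrite (map_inj_uniq (can_inj (swap_valK x))) iota_uniq.
- exact: iota_uniq.
Qed.

Definition succ_entry D T (u v : cell) := entry D T v == (entry D T u).+1.

Definition far_succ D T (u v : cell) :=
  succ_entry D T u v && ~~ next_cell u v && ~~ next_cell v u.

Section SwapFarSuccessors.
Variables (D : seq cell) (T : seq nat) (u v : cell).
Hypotheses (stdT : is_standard D T) (uD : u \in D) (vD : v \in D).
Hypothesis far_uv : far_succ D T u v.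

Let x := entry D T u.
Let T' := map (swap_val x) T.

Lemma entry_swap_far w : w \in D -> entry D T' w = swap_val x (entry D T w).
Proof. by move=> wD; rewrite entry_map // (size_standard stdT). Qed.

Lemma entry_swap_far_v : entry D T' v = x.
Proof.
move: (far_uv); rewrite /far_succ /succ_entry => /andP[/andP[/eqP ev _] _].
by rewrite entry_swap_far // ev /swap_val (gtn_eqF (ltnSn x)) eqxx.
Qed.

Lemma swap_far_standard : is_standard D T'.
Proof.
move: (far_uv); rewrite /far_succ /succ_entry => /andP[/andP[/eqP ev nuv] _].
apply: standardP.
  apply: perm_trans (perm_map _ (perm_standard stdT)) (perm_swap_val _).
  by have := entry_range stdT uD; have := entry_range stdT vD; rewrite ev -/x; lia.
move=> w w' wD w'D nww'; rewrite !entry_swap_far //.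
apply: swap_val_lt; first exact: entry_lt.
apply: contra nuv; rewrite xpair_eqE => /andP[/eqP ew /eqP ew'].
have -> : u = w by apply: (entry_inj stdT uD wD); rewrite ew.
by have -> : v = w' by apply: (entry_inj stdT vD w'D); rewrite ev ew'.
Qed.

Lemma swap_far_succ : far_succ D T' v u.
Proof.
move: (far_uv); rewrite /far_succ /succ_entry => /andP[/andP[/eqP ev nuv] nvu].
rewrite !entry_swap_far // ev -/x /swap_val eqxx.
by rewrite (gtn_eqF (ltnSn x)) !eqxx nuv nvu.
Qed.

End SwapFarSuccessors.

Lemma count_far_succ_le D u v : u \in D -> v \in D ->
  count (fun T => far_succ D T u v) (SYT D) <= count (fun T => far_succ D T v u) (SYT D).
Proof.
move=> uD vD; rewrite -!size_filter.
rewrite -(size_map (fun T => map (swap_val (entry D T u)) T)); apply: uniq_leq_size.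
  rewrite map_inj_in_uniq ?(filter_uniq _ (SYT_uniq D)) //.
  move=> T1 T2; rewrite mem_filter mem_SYT => /andP[f1 s1].
  rewrite mem_filter mem_SYT => /andP[f2 s2] e12.
  have ex : entry D T1 u = entry D T2 u.
    by rewrite -(entry_swap_far_v s1 vD f1) -(entry_swap_far_v s2 vD f2) e12.
  by move: e12; rewrite ex => /(inj_map (can_inj (swap_valK _))).
move=> T' /mapP[T]; rewrite mem_filter mem_SYT => /andP[fT sT] ->.
by rewrite mem_filter mem_SYT (swap_far_succ sT uD vD fT) (swap_far_standard sT uD vD fT).
Qed.

Lemma count_far_succC D u v : u \in D -> v \in D ->
  count (fun T => far_succ D T u v) (SYT D) = count (fun T => far_succ D T v u) (SYT D).
Proof. by move=> uD vD; apply/eqP; rewrite eqn_leq !count_far_succ_le. Qed.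

Definition least_cell (D : seq cell) (c : cell) :=
  forall w, w \in D -> w != c -> exists2 w', w' \in D & next_cell w' w.

Definition greatest_cell (D : seq cell) (c : cell) :=
  forall w, w \in D -> w != c -> exists2 w', w' \in D & next_cell w w'.

Definition vert_adj D T (u : cell) :=
  ((u.1.+1, u.2) \in D) && succ_entry D T u (u.1.+1, u.2).

Lemma succ_entry_split D T u v (b : bool) : is_standard D T -> u \in D -> v \in D ->
  (b && succ_entry D T u v : nat) = (b && far_succ D T u v)
    + ((v == (u.1, u.2.+1)) && (b && succ_entry D T u v))
    + ((v == (u.1.+1, u.2)) && (b && succ_entry D T u v)).
Proof.
move=> stdT uD vD; rewrite /far_succ.
case: b; case succ_uv: (succ_entry D T u v); rewrite /= ?andbF //.
have -> : next_cell v u = false.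
  by apply/negP => /(entry_lt stdT vD uD); move/eqP: succ_uv; lia.
rewrite /next_cell; case: eqVneq => [->|_]; rewrite ?xpair_eqE /=; lia.
Qed.

Lemma sum_succ_entry_split D T u (C : pred cell) : uniq D -> is_standard D T -> u \in D ->
  \sum_(v <- D) (C v && succ_entry D T u v : nat) =
  \sum_(v <- D) (C v && far_succ D T u v : nat)
    + (C (u.1, u.2.+1) && horiz_adj D T u) + (C (u.1.+1, u.2) && vert_adj D T u).
Proof.
move=> uniqD stdT uD; rewrite (eq_big_seq _ (fun v vD => succ_entry_split (C v) stdT uD vD)).
rewrite !big_split /= !sumb_eq_uniq // /horiz_adj /vert_adj /succ_entry.
by case: (C _); case: (C _); case: (_ \in D); case: (_ \in D).
Qed.

Definition far_from_col D T a :=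
  \sum_(u <- D) \sum_(v <- D) ((u.2 == a) && far_succ D T u v : nat).
Definition far_into_col D T a :=
  \sum_(u <- D) \sum_(v <- D) ((v.2 == a) && far_succ D T u v : nat).
Definition horiz_adj_col D T a := count (fun u => (u.2 == a) && horiz_adj D T u) D.
Definition vert_adj_col D T a := count (fun u => (u.2 == a) && vert_adj D T u) D.

Lemma sum_SYT_far D (F : cell -> cell -> bool) :
  \sum_(T <- SYT D) \sum_(u <- D) \sum_(v <- D) (F u v && far_succ D T u v : nat) =
  \sum_(u <- D) \sum_(v <- D) F u v * count (fun T => far_succ D T u v) (SYT D).
Proof.
rewrite exchange_big; apply: eq_bigr => u _; rewrite exchange_big; apply: eq_bigr => v _.
by rewrite count_sumb sum_andbl.
Qed.

Lemma sum_far_from_col D a :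
  \sum_(T <- SYT D) far_from_col D T a = \sum_(T <- SYT D) far_into_col D T a.
Proof.
rewrite /far_from_col /far_into_col !(sum_SYT_far D) [RHS]exchange_big /=.
by apply: eq_big_seq => u uD; apply: eq_big_seq => v vD; rewrite count_far_succC.
Qed.

Lemma adj_count_col0 D : {in D, forall u, 0 < u.2} -> adj_count D 0 = 0.
Proof.
move=> col_gt0; rewrite /adj_count big1_seq // => T _.
by apply/eqP; rewrite -leqn0 leqNgt -has_count; apply/hasP => -[u /col_gt0]; case: (u.2).
Qed.

Section ColumnBalance.
Variables (D : seq cell) (c1 cN : cell).
Hypotheses (uniqD : uniq D) (c1D : c1 \in D) (cND : cN \in D).
Hypotheses (least_c1 : least_cell D c1) (greatest_cN : greatest_cell D cN).

Let size_gt0 : 0 < size D.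
Proof. by move: c1D; rewrite -index_mem; apply: leq_ltn_trans. Qed.

Lemma entry_eq1 T : is_standard D T -> {in D, forall w, (entry D T w == 1) = (w == c1)}.
Proof.
move=> stdT; have min1 w : w \in D -> entry D T w = 1 -> w = c1.
  move=> wD ew; apply/eqP/negPn/negP => /(least_c1 wD) [w' w'D /(entry_lt stdT w'D wD)].
  by have := entry_range stdT w'D; rewrite ew; lia.
have [w0 w0D ew0] := entry_onto uniqD stdT (k := 1) size_gt0.
by move=> w wD; apply/eqP/eqP => [/(min1 w wD) //| ->]; rewrite -(min1 w0 w0D ew0).
Qed.

Lemma entry_eq_size T : is_standard D T ->
  {in D, forall w, (entry D T w == size D) = (w == cN)}.
Proof.
move=> stdT; have max_size w : w \in D -> entry D T w = size D -> w = cN.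
  move=> wD ew; apply/eqP/negPn/negP => /(greatest_cN wD) [w' w'D /(entry_lt stdT wD w'D)].
  by have := entry_range stdT w'D; rewrite ew; lia.
have [w0 w0D ew0] : exists2 w0, w0 \in D & entry D T w0 = size D.
  by apply: (entry_onto uniqD stdT); rewrite size_gt0 leqnn.
by move=> w wD; apply/eqP/eqP => [/(max_size w wD) //| ->]; rewrite -(max_size w0 w0D ew0).
Qed.

Lemma sum_succ_entry T u : is_standard D T -> u \in D ->
  \sum_(v <- D) (succ_entry D T u v : nat) = (u != cN).
Proof.
move=> stdT uD; rewrite (sum_entry_eq uniqD stdT) -(entry_eq_size stdT uD).
by have := entry_range stdT uD; lia.
Qed.

Lemma sum_pred_entry T v : is_standard D T -> v \in D ->
  \sum_(u <- D) (succ_entry D T u v : nat) = (v != c1).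
Proof.
move=> stdT vD; have := entry_range stdT vD; rewrite -(entry_eq1 stdT vD).
set k := entry D T v => /andP[k_gt0 k_le].
rewrite (eq_bigr (fun u => (entry D T u == k.-1 : nat))); last first.
  by move=> u _; rewrite /succ_entry -/k; lia.
by rewrite (sum_entry_eq uniqD stdT); lia.
Qed.

Lemma succ_from_col T a : is_standard D T ->
  \sum_(u <- D) \sum_(v <- D) ((u.2 == a) && succ_entry D T u v : nat) + (cN.2 == a) =
  count (fun u => u.2 == a) D.
Proof.
move=> stdT; rewrite -(count_neq_uniq uniqD _ cND); congr addn.
by apply: eq_big_seq => u uD; rewrite sum_andbl sum_succ_entry // mulnb.
Qed.

Lemma succ_into_col T a : is_standard D T ->
  \sum_(u <- D) \sum_(v <- D) ((v.2 == a) && succ_entry D T u v : nat) + (c1.2 == a) =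
  count (fun v => v.2 == a) D.
Proof.
move=> stdT; rewrite exchange_big -(count_neq_uniq uniqD _ c1D); congr addn.
by apply: eq_big_seq => v vD; rewrite sum_andbl sum_pred_entry // mulnb.
Qed.

Lemma succ_from_col_split T a : is_standard D T ->
  \sum_(u <- D) \sum_(v <- D) ((u.2 == a) && succ_entry D T u v : nat) =
  far_from_col D T a + horiz_adj_col D T a + vert_adj_col D T a.
Proof.
move=> stdT; rewrite /far_from_col /horiz_adj_col /vert_adj_col !count_sumb -!big_split.
by apply: eq_big_seq => u uD; rewrite (sum_succ_entry_split (fun=> u.2 == a)).
Qed.

Lemma succ_into_col_split T b : is_standard D T ->
  \sum_(u <- D) \sum_(v <- D) ((v.2 == b.+1) && succ_entry D T u v : nat) =
  far_into_col D T b.+1 + horiz_adj_col D T b + vert_adj_col D T b.+1.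
Proof.
move=> stdT; rewrite /far_into_col /horiz_adj_col /vert_adj_col !count_sumb -!big_split.
by apply: eq_big_seq => u uD; rewrite (sum_succ_entry_split (fun v => v.2 == b.+1)).
Qed.

Lemma adj_count_step b :
  adj_count D b.+1 + num_SYT D * (cN.2 == b.+1) = adj_count D b + num_SYT D * (c1.2 == b.+1).
Proof.
have balance T : T \in SYT D ->
    far_from_col D T b.+1 + horiz_adj_col D T b.+1 + vert_adj_col D T b.+1 + (cN.2 == b.+1) =
    far_into_col D T b.+1 + horiz_adj_col D T b + vert_adj_col D T b.+1 + (c1.2 == b.+1).
  rewrite mem_SYT => stdT.
  by rewrite -succ_from_col_split // -succ_into_col_split // succ_from_col // succ_into_col.
have adj_countE a : adj_count D a = \sum_(T <- SYT D) horiz_adj_col D T a by [].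
have := @eq_big_seq nat 0 addn _ (SYT D) _ _ balance.
rewrite !big_split /= sum_far_from_col !sum_nat_const_seq !adj_countE /num_SYT; lia.
Qed.

Lemma adj_count_const : c1.2 = 1 -> {in D, forall u, 0 < u.2} ->
  forall c, 0 < c < cN.2 -> adj_count D c = num_SYT D.
Proof.
move=> c1_col col_gt0; elim=> [//|c IH] /andP[_ c_lt].
have := adj_count_step c; rewrite c1_col (gtn_eqF c_lt) muln0 addn0.
case: c IH c_lt => [|c] IH c_lt.
  by rewrite adj_count_col0 // eqxx muln1 add0n.
by rewrite IH; [rewrite muln0 addn0 | lia].
Qed.

End ColumnBalance.

Section FlushRightRows.
Variables (D : seq cell) (l k : nat) (s : nat -> nat).
Hypothesis mem_D : forall x : cell, (x \in D) = (0 < x.1 <= l) && (s x.1 <= x.2 <= k).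
Hypotheses (uniqD : uniq D) (s1 : s 1 = 1) (s_mono : {homo s : i j / i <= j}).
Hypotheses (l_gt0 : 0 < l) (sl_le : s l <= k).

Lemma flush_right_least : least_cell D (1, 1).
Proof.
move=> [i j]; rewrite mem_D xpair_eqE /= => /andP[/andP[i_gt0 i_le] /andP[sj j_le]] ne.
case: (ltnP (s i) j) => [s_lt | s_ge].
  exists (i, j.-1); first by rewrite mem_D /=; lia.
  by rewrite /next_cell prednK ?eqxx //; lia.
have [i1 | i_ne1] := eqVneq i 1; first by exfalso; move: s_ge sj ne; rewrite i1 s1; lia.
have := s_mono (leq_pred i); exists (i.-1, j); first by rewrite mem_D /=; lia.
by rewrite /next_cell prednK ?eqxx ?orbT //; lia.
Qed.

Lemma flush_right_greatest : greatest_cell D (l, k).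
Proof.
move=> [i j]; rewrite mem_D xpair_eqE /= => /andP[/andP[i_gt0 i_le] /andP[sj j_le]] ne.
case: (ltnP j k) => [j_lt | j_ge].
  by exists (i, j.+1); rewrite ?mem_D /= /next_cell ?eqxx //; lia.
have i_lt : i < l by lia.
have := s_mono i_lt; exists (i.+1, j); first by rewrite mem_D /=; lia.
by rewrite /next_cell eqxx orbT.
Qed.

Lemma adj_count_flush_right c : 0 < c < k -> adj_count D c = num_SYT D.
Proof.
have := s_mono l_gt0; rewrite s1 => s_ge1.
apply: (adj_count_const (c1 := (1, 1)) uniqD _ _ flush_right_least flush_right_greatest).
- by rewrite mem_D s1 /=; lia.
- by rewrite mem_D /=; lia.
- by [].
- by move=> [i j]; rewrite mem_D /= => /andP[/andP[/s_mono]]; rewrite s1; lia.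
Qed.

End FlushRightRows.

Lemma young_cells_uniq la : uniq (young_cells la).
Proof.
apply: allpairs_uniq_dep; first exact: iota_uniq.
  by move=> i _; apply: iota_uniq.
by move=> [i1 j1] [i2 j2] _ _ /= [-> ->].
Qed.

Lemma shifted_cells_uniq la : uniq (shifted_cells la).
Proof.
apply: allpairs_uniq_dep; first exact: iota_uniq.
  by move=> i _; apply: iota_uniq.
by move=> [i1 j1] [i2 j2] _ _ /= [-> /eqP]; rewrite eqn_add2r => /eqP ->.
Qed.

Lemma mem_young_rect m n (x : cell) :
  (x \in young_cells (nseq m n)) = (0 < x.1 <= m) && (1 <= x.2 <= n).
Proof.
apply/allpairsPdep/idP => [[i [j]] | ]; rewrite size_nseq.
  by rewrite !mem_iota nth_nseq => -[/= i_lt]; rewrite i_lt => j_lt -> /=; lia.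
case: x => [a b] /= range; exists a.-1, b.-1; rewrite !mem_iota nth_nseq.
by split; [lia | case: ifP; lia | congr pair; lia].
Qed.

Section ShiftedStaircase.
Variable la : seq nat.
Hypothesis strict_la : strict_partition la.
Hypothesis la_stair : forall i, i < size la -> nth 0 la i = nth 0 la 0 - i.

Lemma size_shifted_stair : size la <= nth 0 la 0.
Proof.
case/andP: strict_la => /allP la_gt0 _; case: (ltnP 0 (size la)) => [l_gt0 | ]; last lia.
have last_lt : (size la).-1 < size la by lia.
by have := la_gt0 _ (mem_nth 0 last_lt); rewrite /= la_stair //; lia.
Qed.

Lemma mem_shifted_stair (x : cell) :
  (x \in shifted_cells la) = (0 < x.1 <= size la) && (x.1 <= x.2 <= nth 0 la 0).
Proof.
have l_le := size_shifted_stair.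
apply/allpairsPdep/idP => [[i [j]] | ].
  by rewrite !mem_iota => -[/= i_lt]; rewrite la_stair // => j_lt -> /=; lia.
case: x => [a b] /= range; exists a.-1, (b - a); rewrite !mem_iota la_stair; last lia.
by split; [lia | lia | congr pair; lia].
Qed.

End ShiftedStaircase.

Theorem mainTheorem15 :
  (forall m n c : nat, 0 < m -> 1 <= c <= n - 1 ->
     adj_count (young_cells (nseq m n)) c = f_shape (nseq m n)) /\
  (forall (la : seq nat) (c : nat),
     strict_partition la ->
     (forall i, i < size la -> nth 0 la i = nth 0 la 0 - i) ->
     1 <= c <= nth 0 la 0 - 1 ->
     adj_count (shifted_cells la) c = g_shape la).
Proof.
split=> [m n c m_gt0 c_range | la c strict_la la_stair c_range].
  by apply: (adj_count_flush_right (s := fun=> 1) (mem_young_rect m n));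
    rewrite ?young_cells_uniq //; lia.
have l_le := size_shifted_stair strict_la la_stair.
have l_gt0 : 0 < size la by move: c_range; case: (la) => //=; lia.
by apply: (adj_count_flush_right (s := id) (mem_shifted_stair strict_la la_stair));
  rewrite ?shifted_cells_uniq //; lia.
Qed.
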